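(* Fix one of the moves $F1$, $F2$ and one of the moves $F3$, $F4$. Let $D$ be the Gauss diagram of an arbitrary twisted knot diagram. Then there is a finite sequence of moves of types $R1$, $R2$, $R3$, $T2$, $T3$, together with the forbidden moves $T4$, the chosen one of $F1$/$F2$, and the chosen one of $F3$/$F4$, which transforms $D$ into either the Gauss diagram of the trivial knot (a circle with no chords and no bars) or the Gauss diagram of the trivial knot with a bar (a circle with no chords and exactly one bar).
   Context: A twisted knot diagram is a virtual knot diagram (an oriented generic immersed circle in the plane whose double points are either classical crossings, carrying over/under information, or virtual crossings, carrying none) which may in addition carry finitely many bars: short segments marked transversally on arcs, away from crossings. Twisted knots are equivalence classes of such diagrams under the classical Reidemeister moves $R1,R2,R3$, the virtual Reidemeister moves $V1$–$V4$, and the twisted Reidemeister moves $T1$ (a bar slides through a virtual crossing), $T2$ (two consecutive bars on an arc cancel), $T3$ (a classical crossing having a bar on each of its four incident arcs next to the crossing is replaced by the crossing with over- and under-strand exchanged, the four bars being removed). Gauss diagram of a twisted knot diagram: an oriented circle (the parametrizing circle of the knot) on which are marked, in the order met when traversing the knot from a basepoint, the two preimages of each classical crossing and one point for each bar. For each classical crossing a chord joins its two preimages, oriented from the overcrossing preimage (the arrowtail) to the undercrossing preimage (the arrowhead), and labelled by the sign $\varepsilon\in\{+,-\}$ of the crossing. Virtual crossings are not recorded. Two marked points (chord endpoints or bars) are called adjacent if no other marked point lies between them on the circle. Moves on Gauss diagrams (each may be applied in either direction): - $R1,R2,R3$: the standard Gauss-diagram versions of the classical Reidemeister moves, i.e.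 the changes of Gauss diagrams induced by classical Reidemeister moves on diagrams (e.g. $R1$ adds or removes a chord of any orientation and sign whose two endpoints are adjacent). - $T2$: add or remove two adjacent bars. - $T3$: if each endpoint of a chord is immediately preceded and immediately followed by a bar, remove these four bars, reverse the orientation of the chord and change its sign (the Gauss-diagram version of the move $T3$ above). Virtual moves and $T1$ do not change the Gauss diagram. Forbidden moves: - $T4$: add or remove a chord (of any orientation and sign) whose two endpoints are separated by exactly one bar and no other marked point (a curl with a bar). - $F1$: exchange the positions of two adjacent arrowheads of different chords (signs arbitrary). - $F2$: exchange the positions of two adjacent arrowtails of different chords (signs arbitrary). - $F3$: if two arrowheads of different chords are separated by exactly one bar and no other marked point, exchange their positions (the bar stays between them). - $F4$: the same as $F3$ for two arrowtails. *)

From mathcomp Require Import all_boot.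

Set Implicit Arguments.
Unset Strict Implicit.
Unset Printing Implicit Defensive.

(* A marked point on the parametrizing circle: either a bar, or an endpoint of
   the chord (classical crossing) with label [c]; [head = true] means the
   arrowhead (undercrossing preimage), [head = false] the arrowtail
   (overcrossing preimage); [pos] is the sign of the crossing (true = +). *)
Inductive pt : Type :=
| Bar : pt
| End : nat -> bool -> bool -> pt.

Definition tl (c : nat) (s : bool) : pt := End c false s.
Definition hd (c : nat) (s : bool) : pt := End c true s.

(* A Gauss diagram is the cyclic word of marked points read from a basepoint;
   [rot] (change of basepoint) does not change the diagram. *)
Definition gauss := seq pt.

Definition is_chord (c : nat) (p : pt) : bool :=
  if p is End c' _ _ then c' == c else false.

Definition endb (c : nat) (h s : bool) (p : pt) : bool :=
  if p is End c' h' s' then [&& c' == c, h' == h & s' == s] else false.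

Definition wf_gauss (w : gauss) : Prop :=
  forall c, count (is_chord c) w = 0 \/
    exists s, [/\ count (endb c false s) w = 1,
                  count (endb c true s) w = 1 &
                  count (is_chord c) w = 2].

Definition fresh (c : nat) (w : gauss) : bool := ~~ has (is_chord c) w.

(* ---------- Moves, stated in one direction (with linear adjacency;
   cyclic adjacency is handled by the basepoint change [rot 1]) ---------- *)

Definition R1_add (w w' : gauss) : Prop :=
  exists u v c s, w = u ++ v /\ fresh c w /\
    (w' = u ++ [:: tl c s; hd c s] ++ v \/ w' = u ++ [:: hd c s; tl c s] ++ v).

(* R2: insert two chords of opposite signs whose arrowtails are adjacent
   (over strand) and whose arrowheads are adjacent (under strand); the under
   strand runs in the same or the opposite direction. *)
Definition R2_add (w w' : gauss) : Prop :=
  exists a b c i j s, w = a ++ b ++ c /\ i != j /\ fresh i w /\ fresh j w /\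
    (w' = a ++ [:: tl i s; tl j (~~ s)] ++ b ++ [:: hd i s; hd j (~~ s)] ++ c \/
     w' = a ++ [:: tl i s; tl j (~~ s)] ++ b ++ [:: hd j (~~ s); hd i s] ++ c).

(* R3: three chords i (top over middle, sign e12), j (top over bottom, sign
   e13), k (middle over bottom, sign e23).  The top strand carries the
   adjacent pair {tail i, tail j}, the middle strand {head i, tail k}, the
   bottom strand {head j, head k}; the booleans o1 o2 o3 give the order inside
   each pair.  Realizability by three strands in the plane forces
   e12*e13 = o2*o3 and e12*e23 = o1*o3 (as signs). *)
Definition r3_top (o1 : bool) i j e12 e13 : seq pt :=
  if o1 then [:: tl i e12; tl j e13] else [:: tl j e13; tl i e12].
Definition r3_mid (o2 : bool) i k e12 e23 : seq pt :=
  if o2 then [:: hd i e12; tl k e23] else [:: tl k e23; hd i e12].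
Definition r3_bot (o3 : bool) j k e13 e23 : seq pt :=
  if o3 then [:: hd j e13; hd k e23] else [:: hd k e23; hd j e13].

Definition arrangement (T : Type) (X Y Z P Q R : T) : Prop :=
  (X, Y, Z) = (P, Q, R) \/ (X, Y, Z) = (P, R, Q) \/ (X, Y, Z) = (Q, P, R) \/
  (X, Y, Z) = (Q, R, P) \/ (X, Y, Z) = (R, P, Q) \/ (X, Y, Z) = (R, Q, P).

Definition R3_move (w w' : gauss) : Prop :=
  exists (i j k : nat) (e12 e13 e23 o1 o2 o3 : bool)
         (X Y Z : seq pt) (a b c d : gauss),
    i != j /\ i != k /\ j != k /\
    (e12 == e13) = (o2 == o3) /\ (e12 == e23) = (o1 == o3) /\
    arrangement X Y Z (r3_top o1 i j e12 e13) (r3_mid o2 i k e12 e23)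
                      (r3_bot o3 j k e13 e23) /\
    w = a ++ X ++ b ++ Y ++ c ++ Z ++ d /\
    w' = a ++ rev X ++ b ++ rev Y ++ c ++ rev Z ++ d.

Definition T2_add (w w' : gauss) : Prop :=
  exists u v, w = u ++ v /\ w' = u ++ [:: Bar; Bar] ++ v.

Definition T3_move (w w' : gauss) : Prop :=
  exists a b c i s,
    w = a ++ [:: Bar; tl i s; Bar] ++ b ++ [:: Bar; hd i s; Bar] ++ c /\
    w' = a ++ [:: hd i (~~ s)] ++ b ++ [:: tl i (~~ s)] ++ c.

Definition T4_add (w w' : gauss) : Prop :=
  exists u v c s, w = u ++ v /\ fresh c w /\
    (w' = u ++ [:: tl c s; Bar; hd c s] ++ v \/
     w' = u ++ [:: hd c s; Bar; tl c s] ++ v).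

Definition F_swap (h : bool) (w w' : gauss) : Prop :=
  exists u v i j s t, i != j /\
    w = u ++ [:: End i h s; End j h t] ++ v /\
    w' = u ++ [:: End j h t; End i h s] ++ v.
Definition F1_move := F_swap true.
Definition F2_move := F_swap false.

Definition F_swap_bar (h : bool) (w w' : gauss) : Prop :=
  exists u v i j s t, i != j /\
    w = u ++ [:: End i h s; Bar; End j h t] ++ v /\
    w' = u ++ [:: End j h t; Bar; End i h s] ++ v.
Definition F3_move := F_swap_bar true.
Definition F4_move := F_swap_bar false.

Inductive choice12 := ChooseF1 | ChooseF2.
Inductive choice34 := ChooseF3 | ChooseF4.

Definition chosen12 (ch : choice12) : gauss -> gauss -> Prop :=
  match ch with ChooseF1 => F1_move | ChooseF2 => F2_move end.
Definition chosen34 (ch : choice34) : gauss -> gauss -> Prop :=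
  match ch with ChooseF3 => F3_move | ChooseF4 => F4_move end.

Definition basic_move (ch12 : choice12) (ch34 : choice34) (w w' : gauss) : Prop :=
  w' = rot 1 w \/ R1_add w w' \/ R2_add w w' \/ R3_move w w' \/
  T2_add w w' \/ T3_move w w' \/ T4_add w w' \/ chosen12 ch12 w w' \/
  chosen34 ch34 w w'.

Definition allowed_move ch12 ch34 (w w' : gauss) : Prop :=
  basic_move ch12 ch34 w w' \/ basic_move ch12 ch34 w' w.

Inductive reachable (step : gauss -> gauss -> Prop) : gauss -> gauss -> Prop :=
| reach_refl w : reachable step w w
| reach_step w w' w'' : step w w' -> reachable step w' w'' -> reachable step w w''.

From mathcomp Require Import all_boot zify.

Set Implicit Arguments.
Unset Strict Implicit.
Unset Printing Implicit Defensive.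

(* Induction on the number of chord endpoints.  Given a chord c, induct on the
   number of endpoints strictly inside one of its two arcs.  If there is none,
   T2 leaves zero or one bar in the arc and c disappears by R1 or T4.
   Otherwise let d be the chord of the first endpoint inside.  T2 followed by
   T3 reverses a chord, changes its sign and puts a bar on both sides of each
   endpoint; applied to c or to d it toggles the kind (head/tail) of the
   endpoint of c starting the arc, resp. of the first endpoint of d inside it,
   together with the parity of the bars between them.  Some combination makes
   both endpoints of the kind exchanged by the chosen F1/F2 with an even number
   of bars between them, or of the kind exchanged by the chosen F3/F4 with an
   odd number.  T2 then leaves zero or one bar, and the chosen move pushes the
   endpoint of d out of the arc.  None of these moves changes well-formedness
   or the number of endpoints. *)

Lemma reachable_trans (step : gauss -> gauss -> Prop) x y z :
  reachable step x y -> reachable step y z -> reachable step x z.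
Proof. by elim=> // w w' w'' Hs _ IH /IH; apply: reach_step. Qed.

Lemma nseq_cons_comm (T : Type) (x : T) k s : x :: nseq k x ++ s = nseq k x ++ x :: s.
Proof. by elim: k => //= k ->. Qed.

Lemma hasNcount0 (T : Type) (P : pred T) u : ~~ has P u -> count P u = 0.
Proof. by rewrite has_count -eqn0Ngt => /eqP. Qed.

Definition is_end (p : pt) : bool := if p is End _ _ _ then true else false.

Definition num_ends (w : gauss) : nat := count is_end w.

Lemma no_ends_nseq u : ~~ has is_end u -> u = nseq (size u) Bar.
Proof. by elim: u => //= -[|c h s] u IH //= /IH <-. Qed.

Definition same_ends (w w' : gauss) : Prop :=
  forall P : pred pt, P Bar = false -> count P w = count P w'.

Lemma same_ends_wf w w' : same_ends w w' -> wf_gauss w -> wf_gauss w'.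
Proof.
move=> Ew Hw c; case: (Hw c) => [H0|[s [H1 H2 H3]]]; first by left; rewrite -Ew.
by right; exists s; rewrite -!Ew.
Qed.

Lemma same_ends_num_ends w w' : same_ends w w' -> num_ends w' = num_ends w.
Proof. by move=> Ew; rewrite /num_ends Ew. Qed.

Lemma count_endb_chord_free c h s u :
  count (is_chord c) u = 0 -> count (endb c h s) u = 0.
Proof.
move=> H; apply/eqP; rewrite -leqn0 -H; apply: sub_count.
by case=> //= c' h' s' /and3P [].
Qed.

Lemma wf_chord_split c w : wf_gauss w -> has (is_chord c) w ->
  exists a b e h s, w = a ++ End c h s :: b ++ End c (~~ h) s :: e /\
    count (is_chord c) (a ++ b ++ e) = 0.
Proof.
move=> Hw Hc; have [s [Htl Hhd Hcnt]] : exists s, [/\ count (endb c false s) w = 1,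
    count (endb c true s) w = 1 & count (is_chord c) w = 2].
  by case: (Hw c) => // H0; move: Hc; rewrite has_count H0.
move: Htl Hhd Hcnt; case: (split_find_nth Bar Hc) => p a w1 Hp /hasNcount0 Ca.
rewrite cat_rcons => Htl Hhd Hcnt.
have Hc1 : has (is_chord c) w1.
  by rewrite has_count; move: Hcnt; rewrite count_cat Ca /= Hp; lia.
move: Htl Hhd Hcnt; case: (split_find_nth Bar Hc1) => q b e Hq /hasNcount0 Cb.
rewrite cat_rcons => Htl Hhd Hcnt.
have Ce : count (is_chord c) e = 0.
  by move: Hcnt; rewrite !count_cat /= count_cat Ca Cb /= Hp Hq; lia.
clear Hcnt; case: p Hp Htl Hhd => // c1 h1 t1 /= /eqP ->.
case: q Hq => // c2 h2 t2 /= /eqP ->.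
rewrite !count_cat /= !count_cat /= !count_endb_chord_free // !eqxx /= => Htl Hhd.
exists a, b, e, h1, t1; split; last by rewrite !count_cat Ca Cb Ce.
suff [-> ->] : h2 = ~~ h1 /\ t2 = t1 by [].
by move: Htl Hhd; case: h1; case: h2; case: t1; case: t2; case: s.
Qed.

Lemma wf_chord_free_rest c a b e h h' s s' :
  wf_gauss (a ++ End c h s :: b ++ End c h' s' :: e) ->
  count (is_chord c) (a ++ b ++ e) = 0.
Proof.
by case/(_ c) => [|[t [_ _]]]; rewrite !count_cat /= !count_cat /= eqxx; lia.
Qed.

Lemma wf_remove_chord c a b e h h' s s' :
  wf_gauss (a ++ End c h s :: b ++ End c h' s' :: e) -> wf_gauss (a ++ b ++ e).
Proof.
move=> Hw c'; have Cfree := wf_chord_free_rest Hw.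
case: (eqVneq c' c) => [->|ne]; first by left.
have E (P : pred pt) : (forall h s, P (End c h s) = false) ->
    count P (a ++ End c h s :: b ++ End c h' s' :: e) = count P (a ++ b ++ e).
  by move=> Pc; rewrite !count_cat /= count_cat /= !Pc; lia.
case: (Hw c') => [H0|[t [H1 H2 H3]]].
  by left; rewrite -E // => h1 s1 /=; rewrite eq_sym (negbTE ne).
right; exists t; rewrite -!E // => h1 s1 /=; rewrite eq_sym (negbTE ne) //.
Qed.

Lemma num_ends_remove_chord c a b e h h' s s' :
  num_ends (a ++ End c h s :: b ++ End c h' s' :: e) = (num_ends (a ++ b ++ e)).+2.
Proof. by rewrite /num_ends !count_cat /= !count_cat /=; lia. Qed.

Definition flip_end (p : pt) : pt := if p is End c h s then End c (~~ h) (~~ s) else Bar.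

Definition flip_at (d : nat) (p : pt) : pt := if is_chord d p then flip_end p else p.

Definition flip_chord (d : nat) (w : gauss) : gauss :=
  flatten [seq if is_chord d p then [:: Bar; flip_end p; Bar] else [:: p] | p <- w].

Lemma flip_chord_cat d u v : flip_chord d (u ++ v) = flip_chord d u ++ flip_chord d v.
Proof. by rewrite /flip_chord map_cat flatten_cat. Qed.

Lemma flip_chord_cons d p u : flip_chord d (p :: u) =
  (if is_chord d p then [:: Bar; flip_end p; Bar] else [:: p]) ++ flip_chord d u.
Proof. by []. Qed.

Lemma flip_chord_id d u : count (is_chord d) u = 0 -> flip_chord d u = u.
Proof.
elim: u => // p u IH; rewrite flip_chord_cons /=.
by case: (is_chord d p) => //= /IH ->.
Qed.

Lemma flip_chord_nseq d k : flip_chord d (nseq k Bar) = nseq k Bar.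
Proof. by elim: k => //= k IH; rewrite flip_chord_cons /= IH. Qed.

Lemma count_flip_chord d P w : P Bar = false ->
  count P (flip_chord d w) = count (P \o flip_at d) w.
Proof.
move=> PBar; elim: w => // p w IH; rewrite flip_chord_cons count_cat IH /= /flip_at.
by case: (is_chord d p); rewrite /= ?PBar ?add0n ?addn0.
Qed.

Lemma is_chord_flip_at d c : is_chord c \o flip_at d =1 is_chord c.
Proof. by case=> //= c' h s; rewrite /flip_at /=; case: (c' == d). Qed.

Lemma endb_flip_at d c h s :
  endb c h s \o flip_at d =1 if c == d then endb c (~~ h) (~~ s) else endb c h s.
Proof.
case=> [|c' h' s'] /=; first by case: (c == d).
rewrite /flip_at /=; case: (eqVneq c' d) => [->|ne]; case: (eqVneq c d) => [->|ne'] //=.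
- by rewrite eqxx /=; case: h; case: h'; case: s; case: s'.
- by rewrite eq_sym (negbTE ne').
- by rewrite (negbTE ne).
Qed.

Lemma wf_flip_chord d w : wf_gauss w -> wf_gauss (flip_chord d w).
Proof.
move=> Hw c; rewrite !count_flip_chord // (eq_count (is_chord_flip_at d c)).
have Eb h s := eq_count (endb_flip_at d c h s) w.
case: (Hw c) => [|[s [H1 H2 H3]]]; [by left | right].
case: (eqVneq c d) Eb => _ Eb; last by exists s; rewrite !count_flip_chord // !Eb.
by exists (~~ s); rewrite !count_flip_chord // !Eb /= negbK.
Qed.

Lemma num_ends_flip_chord d w : num_ends (flip_chord d w) = num_ends w.
Proof.
rewrite /num_ends count_flip_chord //; apply: eq_count.
by case=> //= c h s; rewrite /flip_at /=; case: (c == d).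
Qed.

(* The arc of chord [c] starts with [k] bars and then an endpoint of chord [d];
   [m] is the rest of the arc. *)
Definition window a c o s k d oy t m e : gauss :=
  a ++ End c o s :: (nseq k Bar ++ End d oy t :: m) ++ End c (~~ o) s :: e.

Lemma wf_window_neq a c o s k d oy t m e :
  wf_gauss (window a c o s k d oy t m e) -> d != c.
Proof.
move/wf_chord_free_rest => Cfree; apply/eqP => Edc; move: Cfree.
by rewrite Edc !count_cat /= eqxx; lia.
Qed.

(* The kind of endpoint ([true] = arrowhead) exchanged by the chosen move. *)
Definition head12 (ch : choice12) : bool := if ch is ChooseF1 then true else false.
Definition head34 (ch : choice34) : bool := if ch is ChooseF3 then true else false.

Section Moves.

Variables (ch12 : choice12) (ch34 : choice34).

Local Notation reach := (reachable (allowed_move ch12 ch34)).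

Lemma reach_fwd w w' : basic_move ch12 ch34 w w' -> reach w w'.
Proof. by move=> H; apply: (reach_step (w' := w')); [left | exact: reach_refl]. Qed.

Lemma reach_bwd w w' : basic_move ch12 ch34 w' w -> reach w w'.
Proof. by move=> H; apply: (reach_step (w' := w')); [right | exact: reach_refl]. Qed.

Lemma reach_T2_add u v : reach (u ++ v) (u ++ Bar :: Bar :: v).
Proof. by apply: reach_fwd; do 4 right; left; exists u, v. Qed.

Lemma reach_T2_del u v : reach (u ++ Bar :: Bar :: v) (u ++ v).
Proof. by apply: reach_bwd; do 4 right; left; exists u, v. Qed.

Lemma reach_bars_odd u v k : reach (u ++ nseq k Bar ++ v) (u ++ nseq (odd k) Bar ++ v).
Proof.
rewrite -{1}(odd_double_half k) nseqD -catA catA [in X in reach _ X]catA.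
elim: k./2 => [|j IH]; first exact: reach_refl.
exact: reachable_trans (reach_T2_del _ _) IH.
Qed.

Lemma reach_R1_del u v c h s : fresh c (u ++ v) ->
  reach (u ++ End c h s :: End c (~~ h) s :: v) (u ++ v).
Proof.
move=> Hc; apply: reach_bwd; right; left; exists u, v, c, s.
by do 2 split=> //; case: h; [right | left].
Qed.

Lemma reach_T4_del u v c h s : fresh c (u ++ v) ->
  reach (u ++ End c h s :: Bar :: End c (~~ h) s :: v) (u ++ v).
Proof.
move=> Hc; apply: reach_bwd; do 6 right; left; exists u, v, c, s.
by do 2 split=> //; case: h; [right | left].
Qed.

Lemma reach_F12 u v i j s t : i != j ->
  reach (u ++ End i (head12 ch12) s :: End j (head12 ch12) t :: v)
        (u ++ End j (head12 ch12) t :: End i (head12 ch12) s :: v).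
Proof.
by move=> ij; apply: reach_fwd; do 7 right; left; case: ch12; exists u, v, i, j, s, t.
Qed.

Lemma reach_F34 u v i j s t : i != j ->
  reach (u ++ End i (head34 ch34) s :: Bar :: End j (head34 ch34) t :: v)
        (u ++ End j (head34 ch34) t :: Bar :: End i (head34 ch34) s :: v).
Proof. by move=> ij; apply: reach_fwd; do 8 right; case: ch34; exists u, v, i, j, s, t. Qed.

Lemma reach_T3_flip a b e i h s :
  reach (a ++ End i h s :: b ++ End i (~~ h) s :: e)
        (a ++ Bar :: End i (~~ h) (~~ s) :: Bar :: b ++ Bar :: End i h (~~ s) :: Bar :: e).
Proof.
case: h => /=.
  by apply: reach_bwd; do 5 right; left; exists a, b, e, i, (~~ s); rewrite negbK.
set tl_s := End i false s; set hd_s := End i true s.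
have S1 := reach_T2_add a (tl_s :: b ++ hd_s :: e).
have S2 := reach_T2_add (a ++ [:: Bar; Bar; tl_s]) (b ++ hd_s :: e).
have S3 := reach_T2_add (a ++ [:: Bar; Bar; tl_s; Bar; Bar] ++ b) (hd_s :: e).
have S4 := reach_T2_add (a ++ [:: Bar; Bar; tl_s; Bar; Bar] ++ b ++ [:: Bar; Bar; hd_s]) e.
do 3 rewrite -?catA /= in S2 S3 S4.
apply: reachable_trans S1 (reachable_trans S2 (reachable_trans S3 (reachable_trans S4 _))).
apply: reach_fwd; do 5 right; left.
exists (a ++ [:: Bar]), (Bar :: b ++ [:: Bar]), (Bar :: e), i, s.
by split; do 2 rewrite -?catA /=.
Qed.

Lemma reach_flip_chord d w : wf_gauss w -> has (is_chord d) w -> reach w (flip_chord d w).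
Proof.
move=> Hw Hd; have [a [b [e [h [s [-> Cfree]]]]]] := wf_chord_split Hw Hd.
move: Cfree; rewrite !count_cat => Cfree.
have [Ca Cb Ce] : [/\ count (is_chord d) a = 0, count (is_chord d) b = 0
                      & count (is_chord d) e = 0] by split; lia.
rewrite !(flip_chord_cat, flip_chord_cons) /= eqxx !flip_chord_id //=.
by have := reach_T3_flip a b e d h s; rewrite negbK.
Qed.

Definition rearranges (w w' : gauss) : Prop :=
  [/\ reach w w', wf_gauss w' & num_ends w' = num_ends w].

Definition reducible (w : gauss) : Prop :=
  exists w', [/\ reach w w', wf_gauss w' & num_ends w' < num_ends w].

Lemma rearranges_trans w1 w2 w3 :
  rearranges w1 w2 -> rearranges w2 w3 -> rearranges w1 w3.
Proof.
by case=> R12 _ E12 [R23 W3 E23]; split=> //; [exact: reachable_trans R12 R23 | rewrite E23].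
Qed.

Lemma reducible_rearranges w w' : rearranges w w' -> reducible w' -> reducible w.
Proof.
case=> R _ E [w'' [R' W'' Lt]]; exists w''; split=> //; first exact: reachable_trans R R'.
by rewrite -E.
Qed.

Lemma rearranges_same_ends w w' :
  wf_gauss w -> reach w w' -> same_ends w w' -> rearranges w w'.
Proof. by move=> Hw R E; split=> //; [exact: same_ends_wf Hw | exact: same_ends_num_ends]. Qed.

Lemma rearranges_flip_chord d w :
  wf_gauss w -> has (is_chord d) w -> rearranges w (flip_chord d w).
Proof.
move=> Hw Hd.
by split; [exact: reach_flip_chord | exact: wf_flip_chord | exact: num_ends_flip_chord].
Qed.

Lemma rearranges_flip_outer a c o s k d oy t m e :
  wf_gauss (window a c o s k d oy t m e) ->
  rearranges (window a c o s k d oy t m e)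
    (window (a ++ [:: Bar]) c (~~ o) (~~ s) k.+1 d oy t (m ++ [:: Bar]) (Bar :: e)).
Proof.
move=> Hw; have := wf_chord_free_rest Hw; rewrite !count_cat => Cfree.
have [Ca Cm Ce] : [/\ count (is_chord c) a = 0,
    count (is_chord c) (nseq k Bar ++ End d oy t :: m) = 0 & count (is_chord c) e = 0].
  by rewrite count_cat; split; lia.
suff -> : window (a ++ [:: Bar]) c (~~ o) (~~ s) k.+1 d oy t (m ++ [:: Bar]) (Bar :: e) =
          flip_chord c (window a c o s k d oy t m e).
  by apply: rearranges_flip_chord Hw _; rewrite has_cat /= eqxx orbT.
rewrite /window flip_chord_cat (flip_chord_id Ca) flip_chord_cons /= eqxx.
rewrite flip_chord_cat (flip_chord_id Cm) flip_chord_cons /= eqxx (flip_chord_id Ce) negbK.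
by rewrite -!catA /= -!catA.
Qed.

Lemma rearranges_flip_inner a c o s k d oy t m e :
  wf_gauss (window a c o s k d oy t m e) ->
  rearranges (window a c o s k d oy t m e)
    (window (flip_chord d a) c o s k.+1 d (~~ oy) (~~ t)
            (Bar :: flip_chord d m) (flip_chord d e)).
Proof.
move=> Hw; have /negbTE Ncd : c != d by rewrite eq_sym (wf_window_neq Hw).
suff -> : window (flip_chord d a) c o s k.+1 d (~~ oy) (~~ t)
                 (Bar :: flip_chord d m) (flip_chord d e) =
          flip_chord d (window a c o s k d oy t m e).
  by apply: rearranges_flip_chord Hw _; rewrite has_cat /= has_cat has_cat /= eqxx !orbT.
rewrite /window !(flip_chord_cat, flip_chord_cons) flip_chord_nseq /= Ncd eqxx.
by rewrite -!catA /= nseq_cons_comm.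
Qed.

(* [o] and [oy] are the kinds of the endpoints of [c] and [d] facing each other
   in a [window], [odd_k] the parity of the bars between them. *)
Definition swappable (o odd_k oy : bool) : bool :=
  [&& o == head12 ch12, ~~ odd_k & oy == head12 ch12] ||
  [&& o == head34 ch34, odd_k & oy == head34 ch34].

Lemma swappable_after_flips o b oy :
  [|| swappable o b oy, swappable (~~ o) (~~ b) oy,
      swappable o (~~ b) (~~ oy) | swappable (~~ o) b (~~ oy)].
Proof.
by rewrite /swappable; case: (head12 ch12); case: (head34 ch34); case: o; case: b; case: oy.
Qed.

Lemma rearranges_swap a c o s k d oy t m e :
  wf_gauss (window a c o s k d oy t m e) -> swappable o (odd k) oy ->
  exists a', rearranges (window a c o s k d oy t m e)
                        (a' ++ End c o s :: m ++ End c (~~ o) s :: e).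
Proof.
move=> Hw Hsw; have Ncd : c != d by rewrite eq_sym (wf_window_neq Hw).
have R1 : rearranges (window a c o s k d oy t m e)
    (a ++ End c o s :: nseq (odd k) Bar ++ End d oy t :: m ++ End c (~~ o) s :: e).
  apply: rearranges_same_ends Hw _ _.
    have := reach_bars_odd (rcons a (End c o s)) (End d oy t :: m ++ End c (~~ o) s :: e) k.
    by rewrite !cat_rcons /window -catA.
  move=> P PBar; rewrite /window; do 3 rewrite ?count_cat /=.
  by rewrite !count_nseq PBar; lia.
have [_ Hw1 _] := R1.
case/orP: Hsw => /and3P [/eqP Eo Ek /eqP Eoy]; subst o oy.
- exists (rcons a (End d (head12 ch12) t)); apply: rearranges_trans R1 _.
  rewrite (negbTE Ek) cat_rcons /= in Hw1 *.
  apply: rearranges_same_ends Hw1 (reach_F12 _ _ _ _ Ncd) _ => P _.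
  by rewrite !count_cat /=; lia.
- exists (a ++ [:: End d (head34 ch34) t; Bar]); apply: rearranges_trans R1 _.
  rewrite Ek -catA /= in Hw1 *.
  apply: rearranges_same_ends Hw1 (reach_F34 _ _ _ _ Ncd) _ => P _.
  by rewrite !count_cat /=; lia.
Qed.

Lemma rearranges_window_shrink a c o s k d oy t m e :
  wf_gauss (window a c o s k d oy t m e) ->
  exists a' o' s' m' e',
    rearranges (window a c o s k d oy t m e)
               (a' ++ End c o' s' :: m' ++ End c (~~ o') s' :: e') /\
    num_ends m' = num_ends m.
Proof.
have num_ends_rcons_Bar u : num_ends (u ++ [:: Bar]) = num_ends u.
  by rewrite /num_ends count_cat addn0.
move=> Hw; case/or4P: (swappable_after_flips o (odd k) oy) => Hsw.
- by have [a' R] := rearranges_swap Hw Hsw; exists a', o, s, m, e.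
- have R1 := rearranges_flip_outer Hw; have [_ Hw1 _] := R1.
  have [a' R] := rearranges_swap Hw1 Hsw.
  exists a', (~~ o), (~~ s), (m ++ [:: Bar]), (Bar :: e).
  by split; [exact: rearranges_trans R1 R | exact: num_ends_rcons_Bar].
- have R1 := rearranges_flip_inner Hw; have [_ Hw1 _] := R1.
  have [a' R] := rearranges_swap Hw1 Hsw.
  exists a', o, s, (Bar :: flip_chord d m), (flip_chord d e).
  by split; [exact: rearranges_trans R1 R | exact: num_ends_flip_chord].
- have R1 := rearranges_flip_outer Hw; have [_ Hw1 _] := R1.
  have R2 := rearranges_flip_inner Hw1; have [_ Hw2 _] := R2.
  have Hsw2 : swappable (~~ o) (odd k.+2) (~~ oy) by rewrite /= negbK.
  have [a' R] := rearranges_swap Hw2 Hsw2.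
  exists a', (~~ o), (~~ s), (Bar :: flip_chord d (m ++ [:: Bar])), (flip_chord d (Bar :: e)).
  split; first exact: rearranges_trans R1 (rearranges_trans R2 R).
  by rewrite /= num_ends_flip_chord num_ends_rcons_Bar.
Qed.

Lemma reducible_bars_chord a c o s k e :
  wf_gauss (a ++ End c o s :: nseq k Bar ++ End c (~~ o) s :: e) ->
  reducible (a ++ End c o s :: nseq k Bar ++ End c (~~ o) s :: e).
Proof.
move=> Hw; have := wf_chord_free_rest Hw; rewrite !count_cat count_nseq /= => Cfree.
exists (a ++ e); split.
- have Hfresh : fresh c (a ++ e) by rewrite /fresh has_count count_cat; lia.
  have := reach_bars_odd (rcons a (End c o s)) (End c (~~ o) s :: e) k.
  rewrite !cat_rcons => /reachable_trans; apply.
  by case: (odd k) => /=; [exact: reach_T4_del | exact: reach_R1_del].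
- by apply: same_ends_wf (wf_remove_chord Hw) => P PBar; rewrite !count_cat count_nseq PBar.
- by rewrite num_ends_remove_chord /num_ends !count_cat count_nseq /=; lia.
Qed.

Lemma reducible_chord N a m e c o s : num_ends m < N ->
  wf_gauss (a ++ End c o s :: m ++ End c (~~ o) s :: e) ->
  reducible (a ++ End c o s :: m ++ End c (~~ o) s :: e).
Proof.
elim: N a m e c o s => // N IH a m e c o s Hm Hw.
have [Hends|/no_ends_nseq Em] := boolP (has is_end m); last first.
  by rewrite Em in Hw *; exact: reducible_bars_chord.
move: Hm Hw; case: (split_find_nth Bar Hends) => p b m3 + /no_ends_nseq Eb.
case: p => // d oy t _; rewrite cat_rcons Eb => Hm Hw.
have [a' [o' [s' [m' [e' [R Em']]]]]] := rearranges_window_shrink Hw.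
have [_ Hw' _] := R; apply: reducible_rearranges R _; apply: IH Hw'.
by rewrite Em'; move: Hm; rewrite /num_ends count_cat count_nseq /=; lia.
Qed.

Lemma wf_gauss_reducible w : wf_gauss w -> has is_end w -> reducible w.
Proof.
move=> Hw Hends; move: Hw; case: (split_find_nth Bar Hends) => p a w1 + _.
case: p => // c h s _; rewrite cat_rcons => Hw.
have Hc : has (is_chord c) (a ++ End c h s :: w1) by rewrite has_cat /= eqxx orbT.
have [a' [b' [e' [h' [s' [Ew _]]]]]] := wf_chord_split Hw Hc.
by rewrite Ew in Hw *; exact: reducible_chord (ltnSn _) Hw.
Qed.

End Moves.

Theorem mainTheorem1 (ch12 : choice12) (ch34 : choice34) (D : gauss) :
  wf_gauss D ->
  exists D', reachable (allowed_move ch12 ch34) D D' /\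
             (D' = [::] \/ D' = [:: Bar]).
Proof.
move=> HD; have := ltnSn (num_ends D); move: {2}(num_ends D).+1 => n.
elim: n D HD => [|n IH] D HD Hn //.
have [Hends|/no_ends_nseq ED] := boolP (has is_end D).
  have [D1 [R1 HD1 Lt]] := wf_gauss_reducible ch12 ch34 HD Hends.
  have [D' [R' HD']] := IH D1 HD1 (leq_trans Lt Hn).
  by exists D'; split=> //; exact: reachable_trans R1 R'.
exists (nseq (odd (size D)) Bar); split; last by case: (odd _); [right | left].
by have := reach_bars_odd ch12 ch34 [::] [::] (size D); rewrite !cats0 -ED.
Qed.
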